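(* Let $\rho$ be a $d$-dimensional state with $\Delta(\rho)>0$. Then \[ l(\rho)=\max_{i\in[d]}\big|\{j\in[d]:\ |R^\rho_{ij}|=1\}\big| . \]
   Context: Fixed computational basis; $\Delta$ the dephasing map; $\Pi_I=\sum_{i\in I}|i\rangle\langle i|$; $R^\rho=\Delta(\rho)^{-1/2}\rho\Delta(\rho)^{-1/2}$. $l(\rho)=\max\{\mathrm{rk}(\Pi_I\Delta(\rho)\Pi_I):\ I\subseteq[d],\ \mathrm{rk}(\Pi_I\rho\Pi_I)=1\}$. *)

(* matrices over a numeric algebraically closed field C
   (e.g. algC, or complex R for R : rcfType). *)
From HB Require Import structures.
From mathcomp Require Import all_boot all_order all_algebra.
Set Implicit Arguments. Unset Strict Implicit. Unset Printing Implicit Defensive.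
Import Order.TTheory GRing.Theory Num.Theory.
Local Open Scope ring_scope.

Section Defs.
Variable C : numClosedFieldType.
Variable d : nat.

Definition adjmx m n (A : 'M[C]_(m, n)) : 'M[C]_(n, m) := map_mx Num.conj A^T.

Definition psd (A : 'M[C]_d) : Prop :=
  adjmx A = A /\ forall v : 'cV[C]_d, 0 <= (adjmx v *m A *m v) 0 0.

Definition is_state (rho : 'M[C]_d) : Prop := psd rho /\ \tr rho = 1.

Definition dephase (A : 'M[C]_d) : 'M[C]_d := diag_mx (\row_i A i i).

(* Delta(rho) > 0 : positive definite diagonal, i.e. all diagonal entries > 0 *)
Definition dephase_pos (A : 'M[C]_d) : Prop := forall i, 0 < A i i.

Definition dephase_invsqrt (A : 'M[C]_d) : 'M[C]_d :=
  diag_mx (\row_i (sqrtC (A i i))^-1).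

Definition Rmat (A : 'M[C]_d) : 'M[C]_d :=
  dephase_invsqrt A *m A *m dephase_invsqrt A.

Definition proj (I : {set 'I_d}) : 'M[C]_d :=
  diag_mx (\row_i (if i \in I then 1 else 0)).

Definition lfun (A : 'M[C]_d) : nat :=
  \max_(I : {set 'I_d} | \rank (proj I *m A *m proj I) == 1%N)
     \rank (proj I *m dephase A *m proj I).

End Defs.

From HB Require Import structures.
From mathcomp Require Import all_boot all_order all_algebra.
From mathcomp Require Import ring.
Set Implicit Arguments. Unset Strict Implicit. Unset Printing Implicit Defensive.
Import Order.TTheory GRing.Theory Num.Theory.
Local Open Scope ring_scope.

(* Since rho_ii > 0, |R_ij| = 1 means |rho_ij|^2 = rho_ii rho_jj; call such j
   saturated for i.  The block Pi_I Delta(rho) Pi_I is diagonal with |I| nonzero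
   entries, so l(rho) is the largest I whose block Pi_I rho Pi_I has rank one.
   Rank one forces all 2x2 minors to vanish, so such an I lies inside the
   saturated set of any of its elements.  Conversely the saturated set of i is
   itself admissible: for saturated j the vector e_j - (rho_ij / rho_ii) e_i is
   isotropic for the psd form v |-> v^* rho v, hence lies in the kernel of rho,
   so column j of rho is a multiple of column i. *)

Lemma rank_diag_mx (F : fieldType) n (v : 'rV[F]_n) :
  \rank (diag_mx v) = #|[pred i | v 0 i != 0]|.
Proof.
have /mxdirectP/= rank_sum := @mxdirect_delta F _ [pred i | v 0 i != 0] n id
  (in2W (@inj_id _)).
have -> : \rank (diag_mx v) =
          \rank (\sum_(i | v 0 i != 0) <<delta_mx 0 i : 'rV[F]_n>>)%MS.
  apply/eqmx_rank; apply/andP; split.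
    apply/row_subP => i; rewrite row_diag_mx.
    have [vi0|nz_vi] := eqVneq (v 0 i) 0; first by rewrite vi0 scale0r sub0mx.
    by apply: (sumsmx_sup i) => //; rewrite genmxE scalemx_sub.
  apply/sumsmx_subP => i nz_vi; rewrite genmxE.
  by rewrite -(scalerK nz_vi (delta_mx 0 i)) -row_diag_mx scalemx_sub ?row_sub.
rewrite rank_sum -sum1_card; apply: eq_bigr => i _.
by rewrite mxrank_gen mxrank_delta.
Qed.

Lemma rank_le1_col_mul_row (F : fieldType) m n (M : 'M[F]_(m, n)) :
  (\rank M <= 1)%N -> exists (u : 'cV[F]_m) (v : 'rV[F]_n), M = u *m v.
Proof.
move=> le_rank1; exists (col_ebase M *m pid_mx (\rank M)).
exists (pid_mx (\rank M) *m row_ebase M).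
rewrite mulmxA -(mulmxA (col_ebase M)) mul_pid_mx minnn (minn_idPr le_rank1).
by rewrite mulmx_ebase.
Qed.

Lemma rank_le1_minor (F : fieldType) m n (M : 'M[F]_(m, n)) i1 i2 j1 j2 :
  (\rank M <= 1)%N -> M i1 j1 * M i2 j2 = M i1 j2 * M i2 j1.
Proof.
case/rank_le1_col_mul_row=> u [v ->]; rewrite !mxE !big_ord1.
by rewrite mulrACA [RHS]mulrACA [v _ j2 * _]mulrC.
Qed.

Section PsdForm.
Variables (C : numClosedFieldType) (n : nat).
Implicit Types (A : 'M[C]_n) (x y z : 'cV[C]_n).

Lemma adjmxE p q (M : 'M[C]_(p, q)) i j : adjmx M i j = (M j i)^*.
Proof. by rewrite !mxE. Qed.

Lemma adjmxM p q r (M : 'M[C]_(p, q)) (N : 'M[C]_(q, r)) :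
  adjmx (M *m N) = adjmx N *m adjmx M.
Proof. by rewrite /adjmx trmx_mul map_mxM. Qed.

Lemma adjmxK p q (M : 'M[C]_(p, q)) : adjmx (adjmx M) = M.
Proof. by apply/matrixP=> i j; rewrite !adjmxE conjCK. Qed.

Lemma hermitian_conj A i j : adjmx A = A -> (A i j)^* = A j i.
Proof. by move=> hermA; rewrite -adjmxE hermA. Qed.

Definition sesq A x y := (adjmx x *m A *m y) 0 0.

Lemma sesqPl A a x y z : sesq A (a *: x + y) z = a^* * sesq A x z + sesq A y z.
Proof.
by rewrite /sesq /adjmx linearD linearZ /= map_mxD map_mxZ mulmxDl mulmxDl
  -!scalemxAl !mxE.
Qed.

Lemma sesqPr A a x y z : sesq A z (a *: x + y) = a * sesq A z x + sesq A z y.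
Proof. by rewrite /sesq mulmxDr -scalemxAr !mxE. Qed.

Lemma sesq_conj A x y : adjmx A = A -> sesq A y x = (sesq A x y)^*.
Proof. by move=> hermA; rewrite /sesq -adjmxE !adjmxM adjmxK hermA mulmxA. Qed.

Lemma sesq_deltal A k y : sesq A (delta_mx k 0) y = (A *m y) k 0.
Proof.
rewrite /sesq.
have -> : adjmx (delta_mx k 0 : 'cV[C]_n) = delta_mx 0 k.
  by apply/matrixP=> i j; rewrite !mxE rmorph_nat andbC.
by rewrite -rowE -row_mul mxE.
Qed.

Lemma sesq_delta A k l : sesq A (delta_mx k 0) (delta_mx l 0) = A k l.
Proof. by rewrite sesq_deltal -colE mxE. Qed.

Lemma psd_sesq0_mul0 A w : psd A -> sesq A w w = 0 -> A *m w = 0.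
Proof.
move=> [hermA psdA] w0; apply/matrixP=> k j; rewrite ord1 [RHS]mxE.
set x := (A *m w) k 0; set a := A k k.
have a_ge0 : 0 <= a by have := psdA (delta_mx k 0); rewrite -/(sesq _ _ _) sesq_delta.
have a1_gt0 : 0 < a + 1 by rewrite ltr_wpDl.
pose t := - x / (a + 1).
have conj_t : t^* = - x^* / (a + 1).
  rewrite /t fmorph_div rmorphN rmorphD rmorph1.
  by congr (- _ / (_ + 1)); exact: geC0_conj.
have := psdA (t *: delta_mx k 0 + w); rewrite -/(sesq _ _ _).
rewrite sesqPl !sesqPr w0 sesq_delta sesq_deltal (sesq_conj _ _ hermA) sesq_deltal
  -/x -/a.
(* t = -x/(a+1) makes the form negative unless x = 0. *)
have -> : t^* * (t * a + x) + (t * x^* + 0) =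
    - (x * x^*) * ((a + 2) / (a + 1) ^+ 2).
  by rewrite conj_t /t; field; rewrite lt0r_neq0.
rewrite -normCK mulNr oppr_ge0 pmulr_lle0 ?divr_gt0 ?exprn_gt0 ?ltr_wpDl //.
by rewrite -[`|x| ^+ 2]normrX normr_le0 expf_eq0 /= => /eqP.
Qed.

End PsdForm.

Section PrincipalBlocks.
Variables (C : numClosedFieldType) (d : nat).
Implicit Types (A : 'M[C]_d) (I : {set 'I_d}).

(* For Hermitian A this is the equality case |A_ij|^2 = A_ii A_jj of Cauchy-Schwarz. *)
Definition saturated A i := [set j | A i j * A j i == A i i * A j j].

Lemma proj_mulmx_projE I (X : 'M[C]_d) i j :
  (proj C I *m X *m proj C I) i j = (i \in I)%:R * X i j * (j \in I)%:R.
Proof.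
by rewrite /proj mul_mx_diag mul_diag_mx !mxE; case: (i \in I); case: (j \in I).
Qed.

Lemma rank_proj_dephase A I : (forall k, 0 < A k k) ->
  \rank (proj C I *m dephase A *m proj C I) = #|I|.
Proof.
move=> diag_gt0; have -> : proj C I *m dephase A *m proj C I =
    diag_mx (\row_k ((k \in I)%:R * A k k)).
  apply/matrixP=> i j; rewrite proj_mulmx_projE !mxE.
  case: eqP => [<-|_]; rewrite ?mulr1n ?mulr0n ?mulr0 ?mul0r //.
  by case: (i \in I); rewrite ?mulr1 ?mul0r.
rewrite rank_diag_mx; apply: eq_card => k; rewrite !inE mxE.
by case: (k \in I); rewrite ?mul1r ?mul0r ?eqxx // lt0r_neq0.
Qed.

Lemma rank1_proj_saturated A I i j :
  \rank (proj C I *m A *m proj C I) = 1%N -> i \in I -> j \in I -> j \in saturated A i.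
Proof.
move=> rank1 iI jI; rewrite inE; have := rank_le1_minor i j i j (eq_leq rank1).
by rewrite !proj_mulmx_projE iI jI !mulr1 !mul1r => ->.
Qed.

Lemma psd_saturated_col A i j k : psd A -> 0 < A i i -> j \in saturated A i ->
  A k j = A i j / A i i * A k i.
Proof.
move=> psdA Aii_gt0; rewrite inE => /eqP sat_ij; set c := A i j / A i i.
have Aii_neq0 : A i i != 0 by rewrite lt0r_neq0.
have conj_c : (- c)^* = - (A j i / A i i).
  rewrite rmorphN; congr (- _).
  rewrite -(hermitian_conj _ _ psdA.1) -(geC0_conj (ltW Aii_gt0)); exact: fmorph_div.
have Ajj : A j j = A i j * A j i / A i i by rewrite sat_ij mulrC mulKf.
pose w : 'cV[C]_d := (- c) *: delta_mx i 0 + delta_mx j 0.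
have /(psd_sesq0_mul0 psdA) /matrixP /(_ k 0) : sesq A w w = 0.
  rewrite sesqPl !sesqPr !sesq_delta conj_c Ajj /c; field.
  exact: Aii_neq0.
rewrite mulmxDr -scalemxAr -!colE !mxE mulNr addrC => /eqP.
by rewrite subr_eq0 => /eqP.
Qed.

Lemma rank_proj_saturated A i : psd A -> (forall k, 0 < A k k) ->
  \rank (proj C (saturated A i) *m A *m proj C (saturated A i)) = 1%N.
Proof.
move=> psdA diag_gt0; set S := saturated A i.
have iS : i \in S by rewrite inE.
apply/eqP; rewrite eqn_leq lt0n mxrank_eq0 andbC; apply/andP; split.
  apply/eqP => /matrixP /(_ i i) /eqP; rewrite proj_mulmx_projE iS mulr1 mul1r.
  by rewrite mxE (gt_eqF (diag_gt0 i)).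
pose u : 'cV[C]_d := \col_k ((k \in S)%:R * A k i).
pose v : 'rV[C]_d := \row_j ((j \in S)%:R * (A i j / A i i)).
have -> : proj C S *m A *m proj C S = u *m v.
  apply/matrixP => k j; rewrite proj_mulmx_projE !mxE big_ord1 !mxE.
  case: (boolP (j \in S)) => [jS|_]; last by rewrite !(mulr0, mul0r).
  by rewrite (psd_saturated_col k psdA (diag_gt0 i) jS) mulr1 mul1r mulrA mulrAC.
exact: leq_trans (mxrankM_maxl _ _) (rank_leq_col _).
Qed.

Lemma norm_Rmat_eq1 A i j : psd A -> (forall k, 0 < A k k) ->
  (`|Rmat A i j| == 1) = (j \in saturated A i).
Proof.
move=> psdA diag_gt0; rewrite inE.
have si_gt0 : 0 < sqrtC (A i i) by rewrite sqrtC_gt0.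
have sj_gt0 : 0 < sqrtC (A j j) by rewrite sqrtC_gt0.
have -> : Rmat A i j = A i j / (sqrtC (A i i) * sqrtC (A j j)).
  rewrite /Rmat /dephase_invsqrt mul_mx_diag mul_diag_mx !mxE invfM.
  by rewrite [in RHS]mulrA [A i j * _]mulrC.
have st_gt0 : 0 < sqrtC (A i i) * sqrtC (A j j) by rewrite mulr_gt0.
rewrite normf_div (gtr0_norm st_gt0) -(divr1 1) eqr_div ?lt0r_neq0 ?oner_neq0 //.
rewrite mulr1 mul1r -(eqrXn2 (n := 2)) ?(ltW st_gt0) // exprMn !sqrtCK.
by rewrite normCK (hermitian_conj _ _ psdA.1).
Qed.

End PrincipalBlocks.

Theorem lemma5 (C : numClosedFieldType) (d : nat) (rho : 'M[C]_d) :
  is_state rho -> dephase_pos rho ->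
  lfun rho = (\max_(i < d) #|[set j : 'I_d | (`|Rmat rho i j| == 1)%R]|)%N.
Proof.
move=> [psd_rho _] diag_gt0.
have unit_RmatE i : [set j | `|Rmat rho i j| == 1] = saturated rho i.
  by apply/setP => j; rewrite inE norm_Rmat_eq1.
rewrite /lfun; under eq_bigr => I _ do rewrite rank_proj_dephase //.
apply/eqP; rewrite eqn_leq; apply/andP; split.
  apply/bigmax_leqP => I /eqP rank1.
  have [->|[i iI]] := set_0Vmem I; first by rewrite cards0.
  apply: leq_trans (leq_bigmax i); rewrite unit_RmatE.
  by apply/subset_leq_card/subsetP => j; apply: rank1_proj_saturated.
apply/bigmax_leqP => i _; rewrite unit_RmatE.
by apply: leq_bigmax_cond; rewrite rank_proj_saturated.
Qed.
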